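(* Even superfunctions $u=u(x\,|\,\nu,\tau)$ and $z=z(x\,|\,\nu,\tau)$ of one even variable $x$ and two odd variables $\nu,\tau$ satisfy the super Hilbert–Cartan equation $$z_x=\tfrac12u_{xx}^2+u_{x\nu}u_{x\tau},\quad z_\nu=u_{xx}u_{x\nu},\quad z_\tau=u_{xx}u_{x\tau},\quad u_{\nu\tau}=-u_{xx}$$ if and only if there exist constants $c_0,\dots,c_4\in\mathbb C$ such that $u=c_0+c_1x+\tfrac12c_2x^2+\tfrac16c_3x^3+(c_2+c_3x)\nu\tau$ and $z=c_4+\tfrac12c_2^2x+\tfrac12c_2c_3x^2+\tfrac16c_3^2x^3+c_3(c_2+c_3x)\nu\tau$.
   Context: Derivatives with respect to odd variables are left derivatives, $u_{x\nu}=\partial_\nu\partial_x u$ etc., and $u_{\nu\tau}$ denotes the second derivative of $u$ with respect to $\tau$ and $\nu$ (with the convention $u_{\nu\tau}=-u_{\tau\nu}$ for odd $\nu,\tau$). *)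

From mathcomp Require Import all_boot all_order all_algebra.
From mathcomp Require Import complex.
From mathcomp Require Import all_classical all_reals all_analysis.
Import GRing.Theory Num.Theory numFieldNormedType.Exports.

Set Implicit Arguments. Unset Strict Implicit. Unset Printing Implicit Defensive.
Local Open Scope ring_scope.

(* The complex numbers C = R[i] (R a real closed complete field), viewed as a
   numFieldType, hence as a normed module over itself: derivatives below are
   complex (holomorphic) derivatives. *)
Definition CC (R : realType) : numFieldType := R[i].

(* A superfunction of one even variable x and two odd variables nu, tau
   (generators of the Grassmann algebra, nu*tau = - tau*nu, nu^2 = tau^2 = 0):
     f = f0(x) + fnu(x) nu + ftau(x) tau + fnutau(x) nu tau.               *)
Record superfn (R : realType) := SFun {
  sf0 : CC R -> CC R ;
  sfnu : CC R -> CC R ;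
  sftau : CC R -> CC R ;
  sfnutau : CC R -> CC R }.

Section SuperOps.
Variable R : realType.
Implicit Types (f g : superfn R) (c : CC R).

Definition sadd f g : superfn R :=
  SFun (fun x => sf0 f x + sf0 g x) (fun x => sfnu f x + sfnu g x)
       (fun x => sftau f x + sftau g x) (fun x => sfnutau f x + sfnutau g x).

Definition sopp f : superfn R :=
  SFun (fun x => - sf0 f x) (fun x => - sfnu f x)
       (fun x => - sftau f x) (fun x => - sfnutau f x).

Definition smul f g : superfn R :=
  SFun (fun x => sf0 f x * sf0 g x)
       (fun x => sf0 f x * sfnu g x + sfnu f x * sf0 g x)
       (fun x => sf0 f x * sftau g x + sftau f x * sf0 g x)
       (fun x => sf0 f x * sfnutau g x + sfnutau f x * sf0 g x
                 + sfnu f x * sftau g x - sftau f x * sfnu g x).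

Definition sconst c : superfn R :=
  SFun (fun _ => c) (fun _ => 0) (fun _ => 0) (fun _ => 0).

Definition sX : superfn R := SFun id (fun _ => 0) (fun _ => 0) (fun _ => 0).
Definition snu : superfn R := SFun (fun _ => 0) (fun _ => 1) (fun _ => 0) (fun _ => 0).
Definition stau : superfn R := SFun (fun _ => 0) (fun _ => 0) (fun _ => 1) (fun _ => 0).

Definition dx f : superfn R :=
  SFun (derive1 (sf0 f)) (derive1 (sfnu f)) (derive1 (sftau f))
       (derive1 (sfnutau f)).

(* left derivatives in the odd variables:
   d_nu (nu) = 1, d_nu (tau) = 0, d_nu (nu tau) = tau;
   d_tau (nu) = 0, d_tau (tau) = 1, d_tau (nu tau) = - nu. *)
Definition dnu f : superfn R :=
  SFun (sfnu f) (fun _ => 0) (sfnutau f) (fun _ => 0).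
Definition dtau f : superfn R :=
  SFun (sftau f) (fun x => - sfnutau f x) (fun _ => 0) (fun _ => 0).

Definition smoothC (h : CC R -> CC R) : Prop :=
  forall (n : nat) (x : CC R), derivable (derive1n n h) x 1.

Definition superfunction f : Prop :=
  [/\ smoothC (sf0 f), smoothC (sfnu f), smoothC (sftau f) & smoothC (sfnutau f)].

Definition even_sf f : Prop := sfnu f = (fun _ => 0) /\ sftau f = (fun _ => 0).

End SuperOps.

Declare Scope sfun_scope.
Delimit Scope sfun_scope with SF.
Notation "f + g" := (sadd f g) : sfun_scope.
Notation "f * g" := (smul f g) : sfun_scope.
Notation "- f" := (sopp f) : sfun_scope.
Notation "c %:S" := (sconst c) (at level 2, format "c %:S") : sfun_scope.
Arguments sX {R}.
Arguments snu {R}.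
Arguments stau {R}.

From mathcomp Require Import all_boot all_order all_algebra.
From mathcomp Require Import complex.
From mathcomp Require Import all_classical all_reals all_analysis.
From mathcomp Require Import ring.

(* Writing u = a + b nu tau and z = p + q nu tau, the equation u_{nu tau} = - u_{xx}
   says b = a'' and b'' = 0, the nu- and tau-equations say q = b b', and the
   x-equation says p' = b^2 / 2.  So b is affine and a, p are cubics obtained by
   integration.  Integration rests on the fact that a holomorphic function with
   vanishing derivative is constant, which follows from the real mean value
   theorem applied to its real and imaginary parts along a segment. *)

Set Implicit Arguments.
Unset Strict Implicit.
Unset Printing Implicit Defensive.

Import Order.TTheory GRing.Theory Num.Theory numFieldNormedType.Exports.
Local Open Scope ring_scope.

Section Cubic.
Variable K : numFieldType.

Definition cubic (k0 k1 k2 k3 x : K) : K := k0 + k1 * x + k2 * x ^+ 2 + k3 * x ^+ 3.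

Lemma is_derive_cubic (k0 k1 k2 k3 x : K) :
  is_derive x 1 (cubic k0 k1 k2 k3) (cubic k1 (2 * k2) (3 * k3) 0 x).
Proof.
(* Instances given explicitly: leaving this sum to typeclass search takes minutes. *)
have D := is_deriveD (is_deriveD (is_deriveD (is_derive_cst k0 x 1)
    (is_deriveZ k1 (is_derive_id x 1))) (is_deriveZ k2 (is_deriveX 2 (is_derive_id x 1))))
    (is_deriveZ k3 (is_deriveX 3 (is_derive_id x 1))).
have E : cst k0 + k1 *: id + k2 *: id ^+ 2 + k3 *: id ^+ 3 = cubic k0 k1 k2 k3.
  by apply/funext => y; rewrite /cubic !fctE.
rewrite E in D; apply: (is_derive_eq D).
by rewrite /cubic /GRing.scale /=; ring.
Qed.

Lemma derivable_cubic (k0 k1 k2 k3 x : K) : derivable (cubic k0 k1 k2 k3) x 1.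
Proof. by have [] := is_derive_cubic k0 k1 k2 k3 x. Qed.

Lemma derive1_cubic (k0 k1 k2 k3 : K) :
  derive1 (cubic k0 k1 k2 k3) = cubic k1 (2 * k2) (3 * k3) 0.
Proof. by apply/funext => x; have [_] := is_derive_cubic k0 k1 k2 k3 x; rewrite derive1E. Qed.

End Cubic.

Section ZeroDerivative.
Variable R : realType.
Local Notation C := (CC R).
Local Open Scope complex_scope.
Local Open Scope classical_set_scope.

Lemma normc_real (s : R) : `|s%:C : C| = `|s|%:C.
Proof. by rewrite normc_def /= expr0n addr0 sqrtr_sqr. Qed.

Lemma normc_ge_Im (z : C) : `|complex.Im z|%:C <= `|z|.
Proof.
by rewrite normc_def lecR -sqrtr_sqr ler_sqrt ?lerDr ?sqr_ge0 ?addr_ge0 ?sqr_ge0.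
Qed.

Lemma derive1_eq0_small {h : C -> C} {x : C} :
  derivable h x 1 -> derive1 h x = 0 ->
  forall e : R, 0 < e -> exists2 d : R, 0 < d &
    forall t : C, `|t| < d%:C -> `|h (x + t) - h x| <= e%:C * `|t|.
Proof.
move=> hx h'x0 e e0.
have : (fun t : C => t^-1 *: ((h \o shift x) (t *: 1) - h x)) @ (0 : C)^' --> (0 : C).
  have L : derive h x 1 = 0 by rewrite -derive1E.
  by rewrite /derive in L; move: hx; rewrite /derivable L.
move/cvgr0Pnorm_lt/(_ e%:C); rewrite ltcR => /(_ e0).
rewrite near_withinE => /nbhs_norm0P [[d d']] /=; rewrite ltcE /= => /andP[/eqP -> d0] hd.
exists d => // t td; have [->|t0] := eqVneq t 0; first by rewrite addr0 subrr normr0 mulr0.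
have := hd t td t0; rewrite /GRing.scale /= mulr1 normrM normfV mulrC ltr_pdivrMr ?normr_gt0 //.
by rewrite (addrC x t); apply: ltW.
Qed.

Lemma is_derive0_along_line {P : C -> R} {h : C -> C} (a w : C) (t : R) :
  {morph P : z1 z2 / z1 - z2} -> (forall z, `|P z|%:C <= `|z|) ->
  (forall x, derivable h x 1) -> (forall x, derive1 h x = 0) ->
  is_derive t 1 (fun s : R => P (h (a + s%:C * w))) 0.
Proof.
move=> Psub Pnorm hd h0; set g := fun s : R => P (h (a + s%:C * w)).
have [W W0 wW] : exists2 W : R, 0 < W & `|w| <= W%:C.
  exists (Num.sqrt (complex.Re w ^+ 2 + complex.Im w ^+ 2) + 1).
    by rewrite ltr_wpDl ?sqrtr_ge0.
  by rewrite normc_def lecR lerDl.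
have g'0 : (fun s : R => s^-1 *: ((g \o shift t) (s *: 1) - g t)) @ 0^' --> (0 : R).
  apply/cvgr0Pnorm_le => e e0.
  have [d d0 h_small] := derive1_eq0_small (hd (a + t%:C * w)) (h0 _) (divr_gt0 e0 W0).
  near=> s.
  have s0 : s != 0 by near: s; exact: nbhs_dnbhs_neq.
  have sd : `|s| < d / W by near: s; apply: dnbhs0_lt; exact: divr_gt0.
  have sw : `|s%:C * w| <= (`|s| * W)%:C.
    by rewrite normrM normc_real rmorphM ler_wpM2l // lecR.
  have := h_small (s%:C * w); rewrite (le_lt_trans sw) ?ltcR -?ltr_pdivlMr // => /(_ isT).
  have -> : (g \o shift t) s%:A = P (h (a + t%:C * w + s%:C * w)).
    by rewrite /g /= /GRing.scale /= mulr1; congr (P (h _)); rewrite rmorphD /=; ring.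
  move=> hsw; rewrite -Psub /GRing.scale /= normrM normfV ler_pdivrMl ?normr_gt0 // -lecR.
  apply: le_trans (Pnorm _) (le_trans hsw _).
  apply: le_trans (ler_wpM2l _ sw) _; first by rewrite lecR divr_ge0 ?ltW.
  by rewrite -rmorphM lecR mulrCA divfK ?gt_eqF.
apply: DeriveDef; [exact: cvgP g'0 | exact: cvg_lim g'0].
Unshelve. all: by end_near.
Qed.

Lemma derive1_eq0_cst (h : C -> C) :
  (forall x, derivable h x 1) -> (forall x, derive1 h x = 0) -> forall a b, h a = h b.
Proof.
move=> hd h0 a b.
have on_line (P : C -> R) : {morph P : z1 z2 / z1 - z2} -> (forall z, `|P z|%:C <= `|z|) ->
    P (h a) = P (h b).
  move=> Psub Pnorm.
  have := is_derive_0_is_cst 0 1 (fun t => is_derive0_along_line a (b - a) t Psub Pnorm hd h0).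
  by rewrite mul0r addr0 mul1r addrC subrK.
have := on_line _ (raddfB (@complex.Re R : Rcomplex R -> R)) (@normc_ge_Re R).
have := on_line _ (raddfB (@complex.Im R : Rcomplex R -> R)) normc_ge_Im.
by case: (h a) (h b) => ? ? [? ?] /= -> ->.
Qed.

Lemma cubic_primitive (f : C -> C) (k1 k2 k3 : C) :
  (forall x, derivable f x 1) -> (forall x, derive1 f x = cubic k1 (2 * k2) (3 * k3) 0 x) ->
  forall x, f x = cubic (f 0) k1 k2 k3 x.
Proof.
move=> fd f'E x; set g := cubic (f 0) k1 k2 k3.
have fgd y : derivable (f - g) y 1 by apply: derivableB; [exact: fd | exact: derivable_cubic].
have fg'0 y : derive1 (f - g) y = 0.
  by rewrite derive1E deriveB ?derivable_cubic // -!derive1E f'E derive1_cubic subrr.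
have := derive1_eq0_cst fgd fg'0 x 0; rewrite !fctE => fg.
by rewrite -[f x](subrK (g x)) fg /g /cubic; ring.
Qed.

End ZeroDerivative.

Section SuperHilbertCartan.
Variable R : realType.
Local Notation C := (CC R).

Definition super_hilbert_cartan (u z : superfn R) : Prop :=
  [/\ dx z = ((2^-1)%:S * (dx (dx u) * dx (dx u)) + dnu (dx u) * dtau (dx u))%SF,
      dnu z = (dx (dx u) * dnu (dx u))%SF,
      dtau z = (dx (dx u) * dtau (dx u))%SF &
      dnu (dtau u) = (- dx (dx u))%SF].

Definition hilbert_cartan_u (c0 c1 c2 c3 : C) : superfn R :=
  SFun (cubic c0 c1 (2^-1 * c2) (6^-1 * c3)) (fun _ => 0) (fun _ => 0) (cubic c2 c3 0 0).

Definition hilbert_cartan_z (c2 c3 c4 : C) : superfn R :=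
  SFun (cubic c4 (2^-1 * c2 ^+ 2) (2^-1 * c2 * c3) (6^-1 * c3 ^+ 2))
    (fun _ => 0) (fun _ => 0) (cubic (c3 * c2) (c3 ^+ 2) 0 0).

Lemma hilbert_cartan_uE (c0 c1 c2 c3 : C) :
  (c0%:S + c1%:S * sX + (2^-1 * c2)%:S * (sX * sX) + (6^-1 * c3)%:S * (sX * sX * sX)
   + (c2%:S + c3%:S * sX) * snu * stau)%SF = hilbert_cartan_u c0 c1 c2 c3.
Proof. by congr SFun; apply/funext => x /=; rewrite /cubic; ring. Qed.

Lemma hilbert_cartan_zE (c2 c3 c4 : C) :
  (c4%:S + (2^-1 * c2 ^+ 2)%:S * sX + (2^-1 * c2 * c3)%:S * (sX * sX)
   + (6^-1 * c3 ^+ 2)%:S * (sX * sX * sX) + c3%:S * (c2%:S + c3%:S * sX) * snu * stau)%SF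
  = hilbert_cartan_z c2 c3 c4.
Proof. by congr SFun; apply/funext => x /=; rewrite /cubic; ring. Qed.

Lemma derive1_zero : derive1 (fun _ : C => 0 : C) = (fun _ => 0).
Proof. exact/funext/derive1_cst. Qed.

Lemma super_hilbert_cartan_solution (c0 c1 c2 c3 c4 : C) :
  super_hilbert_cartan (hilbert_cartan_u c0 c1 c2 c3) (hilbert_cartan_z c2 c3 c4).
Proof.
rewrite /super_hilbert_cartan /hilbert_cartan_u /hilbert_cartan_z /dx /=.
rewrite !derive1_cubic !derive1_zero.
by split; congr SFun; apply/funext => x /=; rewrite /cubic; field.
Qed.

Lemma super_hilbert_cartan_even (a b p q : C -> C) :
  super_hilbert_cartan (SFun a (fun _ => 0) (fun _ => 0) b) (SFun p (fun _ => 0) (fun _ => 0) q) ->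
  [/\ b = derive1 (derive1 a), derive1 (derive1 b) = (fun _ => 0),
      q = (fun x => b x * derive1 b x) & derive1 p = (fun x => 2^-1 * b x ^+ 2)].
Proof.
rewrite /super_hilbert_cartan /dx /= !derive1_zero.
case=> [[p'E _ _ _] [_ _ qE _] _ [bE _ _ b''E]].
have ba : b = derive1 (derive1 a).
  by apply/funext => x; have /= /oppr_inj -> := congr1 (@^~ x) bE.
rewrite -ba in p'E qE; split; first exact: ba.
- by apply/funext => x; move/(congr1 (@^~ x))/esym/eqP: b''E; rewrite oppr_eq0 => /eqP.
- by rewrite qE; apply/funext => x; rewrite mulr0 addr0.
- by rewrite p'E; apply/funext => x; rewrite mulr0 addr0 expr2.
Qed.

Lemma hilbert_cartan_even_solved (a b p q : C -> C) :
  smoothC a -> smoothC b -> smoothC p ->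
  b = derive1 (derive1 a) -> derive1 (derive1 b) = (fun _ => 0) ->
  q = (fun x => b x * derive1 b x) -> derive1 p = (fun x => 2^-1 * b x ^+ 2) ->
  exists c0 c1 c2 c3 c4,
    SFun a (fun _ => 0) (fun _ => 0) b = hilbert_cartan_u c0 c1 c2 c3
    /\ SFun p (fun _ => 0) (fun _ => 0) q = hilbert_cartan_z c2 c3 c4.
Proof.
move=> sa sb sp ba b''0 qE p'E.
have [c3 b'E] : exists c3, forall x, derive1 b x = c3.
  by exists (derive1 b 0) => x; apply: derive1_eq0_cst (sb 1%N) _ x 0 => y; rewrite b''0.
have [c2 bE] : exists c2, forall x, b x = cubic c2 c3 0 0 x.
  by exists (b 0); apply: (cubic_primitive (sb 0%N)) => x; rewrite b'E /cubic; ring.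
have [c1 a'E] : exists c1, forall x, derive1 a x = cubic c1 c2 (2^-1 * c3) 0 x.
  exists (derive1 a 0); apply: (cubic_primitive (sa 1%N)) => x.
  by rewrite -ba bE /cubic; field.
have [c0 aE] : exists c0, forall x, a x = cubic c0 c1 (2^-1 * c2) (6^-1 * c3) x.
  by exists (a 0); apply: (cubic_primitive (sa 0%N)) => x; rewrite a'E /cubic; field.
have [c4 pE] : exists c4, forall x,
    p x = cubic c4 (2^-1 * c2 ^+ 2) (2^-1 * c2 * c3) (6^-1 * c3 ^+ 2) x.
  by exists (p 0); apply: (cubic_primitive (sp 0%N)) => x; rewrite p'E bE /cubic; field.
exists c0, c1, c2, c3, c4; split; congr SFun; apply/funext => x.
- exact: aE.
- exact: bE.
- exact: pE.
- by rewrite qE bE b'E /cubic; ring.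
Qed.

End SuperHilbertCartan.

Theorem proposition5p8 (R : realType) (u z : superfn R) :
  superfunction u -> superfunction z -> even_sf u -> even_sf z ->
  ( [/\ dx z = ((2^-1)%:S * (dx (dx u) * dx (dx u)) + dnu (dx u) * dtau (dx u))%SF,
        dnu z = (dx (dx u) * dnu (dx u))%SF,
        dtau z = (dx (dx u) * dtau (dx u))%SF &
        dnu (dtau u) = (- dx (dx u))%SF ]
  <->
    exists c0 c1 c2 c3 c4 : CC R,
      u = (c0%:S + c1%:S * sX + (2^-1 * c2)%:S * (sX * sX)
           + (6^-1 * c3)%:S * (sX * sX * sX)
           + (c2%:S + c3%:S * sX) * snu * stau)%SF
      /\
      z = (c4%:S + (2^-1 * c2 ^+ 2)%:S * sX + (2^-1 * c2 * c3)%:S * (sX * sX)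
           + (6^-1 * c3 ^+ 2)%:S * (sX * sX * sX)
           + c3%:S * (c2%:S + c3%:S * sX) * snu * stau)%SF ).
Proof.
case: u => a unu utau b; case: z => p znu ztau q.
move=> [sa _ _ sb] [sp _ _ _] [/= -> ->] [/= -> ->].
split=> [/super_hilbert_cartan_even [ba b''0 qE p'E] | [c0 [c1 [c2 [c3 [c4 [-> ->]]]]]]].
- have [c0 [c1 [c2 [c3 [c4 [-> ->]]]]]] := hilbert_cartan_even_solved sa sb sp ba b''0 qE p'E.
  by exists c0, c1, c2, c3, c4; rewrite hilbert_cartan_uE hilbert_cartan_zE.
- rewrite hilbert_cartan_uE hilbert_cartan_zE; exact: super_hilbert_cartan_solution.
Qed.
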